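(* Assume the multi-layer setting below with $\nabla f$ being $\hat L$-Lipschitz, and consider the multi-layer SAM flow at a point where not all $g_{k,l}$ vanish. Then for every layer $l\in[D]$ and all $i,j\in[K_l]$ with $i\neq j$, $$\frac{d}{dt}\big(\|\mathcal G_{i,l}\|_F^2-\|\mathcal G_{j,l}\|_F^2\big)=2\rho u_D\big(\|g_{i,l}\|_F^2-\|g_{j,l}\|_F^2\big)+R_{ij,l},$$ where there is a constant $C$ depending only on the maps $\Phi_1,\ldots,\Phi_D$, the $K_l$, $\hat L$, the Frobenius norms of all current cores and the norm of $\nabla f$ at the current point, such that $|R_{ij,l}|\le C\rho^2$ for all $\rho\in(0,1]$.
   Context: Multi-layer setting: there are $D$ layers. Layer $l\in[D]$ has $K_l\ge2$ cores $\mathcal G_{1,l},\ldots,\mathcal G_{K_l,l}$ lying in finite-dimensional real tensor spaces (Frobenius inner product $\langle\cdot,\cdot\rangle_F$, norm $\|\cdot\|_F$), and a multilinear map $\Phi_l$ producing the layer tensor $\mathcal T_l=\Phi_l(\mathcal G_{1,l},\ldots,\mathcal G_{K_l,l})$. The loss is $F=f(\mathcal T_1,\ldots,\mathcal T_D)$ with $f$ continuously differentiable and its full gradient $\hat L$-Lipschitz: $\|\nabla f(\mathcal X)-\nabla f(\mathcal Y)\|\le \hat L\|\mathcal X-\mathcal Y\|$ where $\|\mathcal X\|^2=\sum_l\|\mathcal X_l\|_F^2$ for $\mathcal X=(\mathcal X_1,\ldots,\mathcal X_D)$. Multi-layer SAM flow with radius $\rho>0$: $g_{k,l}=\nabla_{\mathcal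 G_{k,l}}F$ at the current cores, $u_D=(\sum_{l=1}^D\sum_{k=1}^{K_l}\|g_{k,l}\|_F^2)^{-1/2}$, $\tilde{\mathcal G}_{k,l}=\mathcal G_{k,l}+\rho u_D g_{k,l}$, $\tilde g_{k,l}=\nabla_{\mathcal G_{k,l}}F$ evaluated at all perturbed cores $\tilde{\mathcal G}$, and $\frac{d}{dt}\mathcal G_{k,l}=-\tilde g_{k,l}$ for all $k,l$. *)

From HB Require Import structures.
From mathcomp Require Import all_boot all_order all_algebra.
From mathcomp Require Import all_classical all_reals.
From mathcomp Require Import topology normedtype derive.
Unset Printing Implicit Defensive.
Import Order.TTheory GRing.Theory Num.Theory.
Import numFieldNormedType.Exports.
Local Open Scope ring_scope.

Section MultiLayer.
Variable R : realType.

(* A finite-dimensional real tensor space is represented by its flattening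
   'rV[R]_n; the Frobenius inner product is the Euclidean one. *)
Definition dotF {n} (x y : 'rV[R]_n) : R := \sum_(i < n) x ord0 i * y ord0 i.
Definition normF {n} (x : 'rV[R]_n) : R := Num.sqrt (dotF x x).

Definition multilinear {K : nat} {n : 'I_K -> nat} {m : nat}
  (Phi : (forall k : 'I_K, 'rV[R]_(n k)) -> 'rV[R]_m) : Prop :=
  forall (x : forall k : 'I_K, 'rV[R]_(n k)) (k : 'I_K) (a : R) (y z : 'rV[R]_(n k)),
    Phi (dfwith x k (a *: y + z)) = a *: Phi (dfwith x k y) + Phi (dfwith x k z).

Variables (D : nat) (K : 'I_D -> nat) (n : forall l : 'I_D, 'I_(K l) -> nat)
          (m : 'I_D -> nat).

Definition tens := forall l : 'I_D, 'rV[R]_(m l).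
Definition addT (X Y : tens) : tens := fun l => X l + Y l.
Definition scaleT (a : R) (X : tens) : tens := fun l => a *: X l.
Definition oppT (X : tens) : tens := fun l => - X l.
Definition dotT (X Y : tens) : R := \sum_(l < D) dotF (X l) (Y l).
Definition normT (X : tens) : R := Num.sqrt (\sum_(l < D) normF (X l) ^+ 2).

Definition cores := forall l : 'I_D, forall k : 'I_(K l), 'rV[R]_(n l k).
Definition addC (G H : cores) : cores := fun l k => G l k + H l k.
Definition scaleC (a : R) (G : cores) : cores := fun l k => a *: G l k.
Definition zeroC : cores := fun l k => 0.
Definition singleC {l : 'I_D} {k : 'I_(K l)} (v : 'rV[R]_(n l k)) : cores :=
  dfwith zeroC l (dfwith (zeroC l) k v).

Variable Phi : forall l : 'I_D, (forall k : 'I_(K l), 'rV[R]_(n l k)) -> 'rV[R]_(m l).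

Definition layers (G : cores) : tens := fun l => Phi l (G l).

Definition lossF (f : tens -> R) (G : cores) : R := f (layers G).

Definition gradC (f : tens -> R) (G : cores) (l : 'I_D) (k : 'I_(K l))
  : 'rV[R]_(n l k) :=
  \row_(i < n l k)
     derive (fun s : R => lossF f (addC G (scaleC s (singleC (delta_mx ord0 i)))))
            0 1.

Definition uD (f : tens -> R) (G : cores) : R :=
  (Num.sqrt (\sum_(l < D) \sum_(k < K l) normF (gradC f G l k) ^+ 2))^-1.

Definition perturbed (f : tens -> R) (rho : R) (G : cores) : cores :=
  fun l k => G l k + (rho * uD f G) *: gradC f G l k.

Definition samGrad (f : tens -> R) (rho : R) (G : cores) (l : 'I_D) (k : 'I_(K l))
  : 'rV[R]_(n l k) := gradC f (perturbed f rho G) l k.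

(* "f is continuously differentiable with gradient gf": directional derivatives
   are given by <gf X, H>; continuity of gf follows from the Lipschitz hypothesis *)
Definition has_gradient (f : tens -> R) (gf : tens -> tens) : Prop :=
  forall X H : tens,
    is_derive (0 : R) (1 : R) (fun s : R => f (addT X (scaleT s H))) (dotT (gf X) H).

Definition lipschitz_grad (gf : tens -> tens) (Lhat : R) : Prop :=
  forall X Y : tens, normT (addT (gf X) (oppT (gf Y))) <= Lhat * normT (addT X (oppT Y)).

Definition sam_flow_at (f : tens -> R) (rho : R) (gamma : R -> cores) (t : R) : Prop :=
  forall (l : 'I_D) (k : 'I_(K l)),
    is_derive t (1 : R) (fun s : R => gamma s l k) (- samGrad f rho (gamma t) l k).

End MultiLayer.

Arguments multilinear {R K n m} Phi.
Arguments normT {R D m} X.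
Arguments dotT {R D m} X Y.
Arguments layers {R D K n m} Phi G l.
Arguments lossF {R D K n m} Phi f G.
Arguments gradC {R D K n m} Phi f G l k.
Arguments uD {R D K n m} Phi f G.
Arguments perturbed {R D K n m} Phi f rho G l k.
Arguments samGrad {R D K n m} Phi f rho G l k.
Arguments has_gradient {R D m} f gf.
Arguments lipschitz_grad {R D m} gf Lhat.
Arguments sam_flow_at {R D K n m} Phi f rho gamma t.
Arguments dotF {R n} x y.
Arguments normF {R n} x.

(* Euler's identity for multilinear maps gives <G_{k,l}, grad_{G_{k,l}} F> = <grad_{T_l} f, T_l>
   for every core k of layer l.  Along the SAM flow d/dt ||G_{k,l}||^2 = -2 <G_{k,l}, g~_{k,l}>,
   and writing G_{k,l} = G~_{k,l} - rho u_D g_{k,l} this is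
   -2 <grad_{T_l} f(T~), T~_l> + 2 rho u_D <g_{k,l}, g~_{k,l}>, whose first term does not depend
   on k.  The difference for i and j is therefore 2 rho u_D (||g_i||^2 - ||g_j||^2) plus
   2 rho u_D (<g_i, g~_i - g_i> - <g_j, g~_j - g_j>).  As rho u_D ||g_{k,l}|| <= rho, it remains to
   see g~ - g = O(rho): every core moves by O(rho), multilinear maps are Lipschitz on bounded
   sets (estimated in the l1 norm, where ||Phi(w)||_1 <= M prod_k ||w_k||_1), and grad f is
   Lipschitz. *)

From Pilot Require Import Defs.
From HB Require Import structures.
From mathcomp Require Import all_boot all_order all_algebra.
From mathcomp Require Import all_classical all_reals.
From mathcomp Require Import topology normedtype derive.
From mathcomp Require Import ring lra.
Unset Printing Implicit Defensive.

Import Order.TTheory GRing.Theory Num.Theory.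
Import numFieldNormedType.Exports.
Local Open Scope ring_scope.

Section RowNorms.
Context {R : realType}.

Lemma sqrtr_le_sqr (a b : R) : 0 <= b -> a <= b ^+ 2 -> Num.sqrt a <= b.
Proof. by move=> b0 /ler_wsqrtr; rewrite sqrtr_sqr ger0_norm. Qed.

Lemma ler_sqr_sqrtr (a b : R) : 0 <= b -> b ^+ 2 <= a -> b <= Num.sqrt a.
Proof. by move=> b0 /ler_wsqrtr; rewrite sqrtr_sqr ger0_norm. Qed.

Lemma sum_sqr_le_sqr_sum {I : finType} {a : I -> R} : (forall i, 0 <= a i) ->
  \sum_i a i ^+ 2 <= (\sum_i a i) ^+ 2.
Proof.
move=> a0; rewrite expr2 mulr_suml; apply: ler_sum => i _.
by rewrite expr2 ler_wpM2l // (bigD1 i) //= lerDl sumr_ge0.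
Qed.

Definition norm1 {n} (x : 'rV[R]_n) : R := \sum_(p < n) `|x ord0 p|.

Lemma norm1_ge0 {n} (x : 'rV[R]_n) : 0 <= norm1 x.
Proof. exact: sumr_ge0. Qed.

Lemma norm1_0 {n} : norm1 (0 : 'rV[R]_n) = 0.
Proof. by rewrite /norm1 big1 // => p _; rewrite mxE normr0. Qed.

Lemma norm1D {n} (x y : 'rV[R]_n) : norm1 (x + y) <= norm1 x + norm1 y.
Proof. by rewrite /norm1 -big_split; apply: ler_sum => p _; rewrite mxE ler_normD. Qed.

Lemma norm1Z {n} a (x : 'rV[R]_n) : norm1 (a *: x) = `|a| * norm1 x.
Proof. by rewrite /norm1 mulr_sumr; apply: eq_bigr => p _; rewrite mxE normrM. Qed.

Lemma norm1_sum {n} {I : Type} (s : seq I) (P : pred I) (v : I -> 'rV[R]_n) :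
  norm1 (\sum_(i <- s | P i) v i) <= \sum_(i <- s | P i) norm1 (v i).
Proof.
apply: (big_ind2 (fun a b => norm1 a <= b)); rewrite ?norm1_0 //.
by move=> a1 b1 a2 b2 h1 h2; apply: le_trans (norm1D _ _) (lerD h1 h2).
Qed.

Lemma norm1_delta {n} (p : 'I_n) : norm1 (delta_mx 0 p : 'rV[R]_n) = 1.
Proof.
rewrite /norm1 (bigD1 p) //= big1 ?addr0; first by rewrite mxE !eqxx normr1.
by move=> q /negbTE qp; rewrite mxE eq_sym qp andbF normr0.
Qed.

Lemma ler_coord_norm1 {n} (x : 'rV[R]_n) p : `|x ord0 p| <= norm1 x.
Proof. by rewrite /norm1 (bigD1 p) //= lerDl sumr_ge0. Qed.

Lemma dotF_sqr {n} (x : 'rV[R]_n) : dotF x x = \sum_p x ord0 p ^+ 2.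
Proof. by apply: eq_bigr => p _; rewrite expr2. Qed.

Lemma dotF_ge0 {n} (x : 'rV[R]_n) : 0 <= dotF x x.
Proof. by rewrite dotF_sqr sumr_ge0 // => p _; apply: sqr_ge0. Qed.

Lemma dotF_gt0 {n} (x : 'rV[R]_n) : x != 0 -> 0 < dotF x x.
Proof.
move=> x0; have /existsP [p xp] : [exists p, x ord0 p != 0].
  apply: contraNT x0 => /existsPn x0; apply/eqP/rowP => p; rewrite mxE.
  by apply/eqP; rewrite -[_ == _]negbK x0.
rewrite dotF_sqr (bigD1 p) //= ltr_pwDl ?sumr_ge0 // => [|q _].
  by rewrite lt_neqAle sqr_ge0 andbT eq_sym sqrf_eq0.
exact: sqr_ge0.
Qed.

Lemma normF_ge0 {n} (x : 'rV[R]_n) : 0 <= normF x.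
Proof. exact: sqrtr_ge0. Qed.

Lemma normF_sqr {n} (x : 'rV[R]_n) : normF x ^+ 2 = dotF x x.
Proof. by rewrite sqr_sqrtr // dotF_ge0. Qed.

Lemma ler_coord_normF {n} (x : 'rV[R]_n) p : `|x ord0 p| <= normF x.
Proof.
apply: ler_sqr_sqrtr => //; rewrite real_normK ?num_real // dotF_sqr (bigD1 p) //=.
by rewrite lerDl sumr_ge0 // => q _; apply: sqr_ge0.
Qed.

Lemma normF_le_norm1 {n} (x : 'rV[R]_n) : normF x <= norm1 x.
Proof.
apply: sqrtr_le_sqr; first exact: norm1_ge0.
rewrite dotF_sqr; under eq_bigr do rewrite -real_normK ?num_real //.
exact: sum_sqr_le_sqr_sum.
Qed.

Lemma norm1_le_normF {n} (x : 'rV[R]_n) : norm1 x <= n%:R * normF x.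
Proof.
rewrite /norm1 mulr_natl -[X in _ *+ X](card_ord n) -sumr_const.
by apply: ler_sum => p _; apply: ler_coord_normF.
Qed.

Lemma ler_dotF {n} (a b : 'rV[R]_n) : `|dotF a b| <= normF a * norm1 b.
Proof.
rewrite /dotF /norm1 mulr_sumr; apply: le_trans (ler_norm_sum _ _ _) _.
by apply: ler_sum => p _; rewrite normrM ler_wpM2r // ler_coord_normF.
Qed.

Lemma dotFC {n} (a b : 'rV[R]_n) : dotF a b = dotF b a.
Proof. by apply: eq_bigr => p _; rewrite mulrC. Qed.

Lemma dotF_sumr {n} {I : Type} (s : seq I) (P : pred I) (a : 'rV[R]_n) v :
  dotF a (\sum_(i <- s | P i) v i) = \sum_(i <- s | P i) dotF a (v i).
Proof.
rewrite /dotF exchange_big /=; apply: eq_bigr => p _.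
by rewrite summxE mulr_sumr.
Qed.

Lemma dotFDr {n} (a b c : 'rV[R]_n) : dotF a (b + c) = dotF a b + dotF a c.
Proof. by rewrite /dotF -big_split; apply: eq_bigr => p _; rewrite mxE mulrDr. Qed.

Lemma dotFNr {n} (a b : 'rV[R]_n) : dotF a (- b) = - dotF a b.
Proof. by rewrite /dotF -sumrN; apply: eq_bigr => p _; rewrite mxE mulrN. Qed.

Lemma dotFBr {n} (a b c : 'rV[R]_n) : dotF a (b - c) = dotF a b - dotF a c.
Proof. by rewrite dotFDr dotFNr. Qed.

Lemma dotFZr {n} k (a b : 'rV[R]_n) : dotF a (k *: b) = k * dotF a b.
Proof. by rewrite /dotF mulr_sumr; apply: eq_bigr => p _; rewrite mxE mulrCA. Qed.

Lemma dotFBl {n} (a b c : 'rV[R]_n) : dotF (b - c) a = dotF b a - dotF c a.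
Proof. by rewrite dotFC dotFBr !(dotFC a). Qed.

Lemma dotFZl {n} k (a b : 'rV[R]_n) : dotF (k *: b) a = k * dotF b a.
Proof. by rewrite dotFC dotFZr dotFC. Qed.

End RowNorms.

Lemma dfwith_id {I : eqType} {T : I -> Type} (x : forall i, T i) i : dfwith x i (x i) = x.
Proof. by apply: functional_extensionality_dep => j; case: dfwithP. Qed.

Section Multilinear.
Context {R : realType} {K : nat} {n : 'I_K -> nat} {m : nat}
  {Phi : (forall k : 'I_K, 'rV[R]_(n k)) -> 'rV[R]_m}.
Hypothesis Phi_ml : multilinear Phi.
Implicit Types (x w : forall k : 'I_K, 'rV[R]_(n k)) (k : 'I_K).

Lemma multilinear0 x k : Phi (dfwith x k 0) = 0.
Proof.
have := @Phi_ml x k 1 0 0; rewrite !scale1r addr0 => /esym/eqP.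
by rewrite -subr_eq0 addrK => /eqP.
Qed.

Lemma multilinearD x k y z :
  Phi (dfwith x k (y + z)) = Phi (dfwith x k y) + Phi (dfwith x k z).
Proof. by have := @Phi_ml x k 1 y z; rewrite !scale1r. Qed.

Lemma multilinearZ x k a y : Phi (dfwith x k (a *: y)) = a *: Phi (dfwith x k y).
Proof. by have := @Phi_ml x k a y 0; rewrite !addr0 multilinear0 addr0. Qed.

Lemma multilinear_expand x k :
  Phi x = \sum_p x k ord0 p *: Phi (dfwith x k (delta_mx 0 p)).
Proof.
rewrite -{1}(dfwith_id x k) {1}(row_sum_delta (x k)).
apply: (big_ind2 (fun y s => Phi (dfwith x k y) = s)).
- exact: multilinear0.
- by move=> y1 s1 y2 s2 <- <-; rewrite multilinearD.
- by move=> p _; rewrite multilinearZ.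
Qed.

Lemma multilinear_bound_upto r : (r <= K)%N -> forall w0, exists M, 0 <= M /\
  forall w, (forall k, (r <= k)%N -> w k = w0 k) ->
    norm1 (Phi w) <= M * \prod_(k < K | (k < r)%N) norm1 (w k).
Proof.
elim: r => [_ w0|r IH rK w0].
  exists (norm1 (Phi w0)); split; first exact: norm1_ge0.
  move=> w w_w0; have -> : w = w0 by apply: functional_extensionality_dep => k; apply: w_w0.
  by rewrite big_pred0 ?mulr1.
pose r' : 'I_K := Ordinal rK.
have /choice [M HM] := fun p : 'I_(n r') => IH (ltnW rK) (dfwith w0 r' (delta_mx 0 p)).
exists (\sum_p M p); split; first by apply: sumr_ge0 => p _; case: (HM p).
move=> w w_w0; set P := \prod_(k < K | (k < r)%N) norm1 (w k).
have -> : \prod_(k < K | (k < r.+1)%N) norm1 (w k) = norm1 (w r') * P.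
  rewrite (bigD1 r') ?ltnSn //=; congr (_ * _); apply: eq_bigl => k.
  by rewrite ltnS leq_eqVlt -(inj_eq val_inj) /=; case: ltngtP.
rewrite (multilinear_expand w r') mulr_suml; apply: le_trans (norm1_sum _ _ _) _.
apply: ler_sum => p _; rewrite norm1Z mulrCA.
apply: ler_pM; [exact: normr_ge0 | exact: norm1_ge0 | exact: ler_coord_norm1 |].
have [_ HMp] := HM p.
have -> : P = \prod_(k < K | (k < r)%N) norm1 (dfwith w r' (delta_mx 0 p) k).
  apply: eq_bigr => k kr; rewrite dfwithout //.
  by apply: contraTneq kr => <-; rewrite ltnn.
apply: HMp => k rk; case: (eqVneq r' k) => [<-|ne]; first by rewrite !dfwithin.
rewrite !dfwithout // w_w0 // ltn_neqAle rk andbT.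
by apply: contra ne => /eqP e; apply/eqP/val_inj.
Qed.

Lemma multilinear_bound : exists M, 0 <= M /\
  forall w, norm1 (Phi w) <= M * \prod_(k < K) norm1 (w k).
Proof.
have [M [M0 HM]] := multilinear_bound_upto _ (leqnn K) (fun k => 0).
exists M; split => // w; rewrite (eq_bigl (fun k : 'I_K => (k < K)%N)) ?HM // => k.
  by rewrite leqNgt ltn_ord.
by rewrite ltn_ord.
Qed.

Definition add_upto x (y : forall k, 'rV[R]_(n k)) r : forall k, 'rV[R]_(n k) :=
  fun k => if (k < r)%N then x k + y k else x k.

Lemma multilinear_add_upto_step x (y : forall k, 'rV[R]_(n k)) r (rK : (r < K)%N) :
  Phi (add_upto x y r.+1) - Phi (add_upto x y r) =
  Phi (dfwith (add_upto x y r) (Ordinal rK) (y (Ordinal rK))).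
Proof.
pose r' : 'I_K := Ordinal rK.
have -> : add_upto x y r.+1 = dfwith (add_upto x y r) r' (x r' + y r').
  apply: functional_extensionality_dep => k; rewrite /add_upto.
  case: dfwithP => [|k' ne]; first by rewrite ltnSn.
  rewrite ltnS leq_eqVlt; case: eqP => //= e.
  by case/eqP: ne; apply: val_inj.
have {2}<- : dfwith (add_upto x y r) r' (x r') = add_upto x y r.
  have e : add_upto x y r r' = x r' by rewrite /add_upto ltnn.
  by rewrite -{1}e dfwith_id.
by rewrite multilinearD addrAC subrr add0r.
Qed.

Lemma multilinear_lipschitz {M : R} {x y : forall k, 'rV[R]_(n k)} {eta A : R} :
  0 <= M ->
  (forall w, norm1 (Phi w) <= M * \prod_(k < K) norm1 (w k)) -> 1 <= A ->
  (forall k, norm1 (y k) <= eta) -> (forall k, norm1 (x k) + norm1 (y k) <= A) ->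
  norm1 (Phi (fun k => x k + y k) - Phi x) <= K%:R * M * eta * A ^+ K.
Proof.
move=> M0 HM A1 y_eta xy_A.
have -> : (fun k => x k + y k) = add_upto x y K.
  by apply: functional_extensionality_dep => k; rewrite /add_upto ltn_ord.
have {1}-> : x = add_upto x y 0.
  by apply: functional_extensionality_dep => k; rewrite /add_upto ltn0.
rewrite -(telescope_sumr (fun r => Phi (add_upto x y r)) (leq0n K)).
apply: le_trans (norm1_sum _ _ _) _.
rewrite -mulrA -mulrA mulr_natl -[X in _ *+ X](subn0 K) -sumr_const_nat.
rewrite big_nat_cond [X in _ <= X]big_nat_cond; apply: ler_sum => r /andP[/andP[_ rK] _].
rewrite multilinear_add_upto_step; apply: le_trans (HM _) _; rewrite ler_wpM2l //.
have -> : A ^+ K = \prod_(k < K) A by rewrite prodr_const card_ord.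
set r' := Ordinal rK; rewrite (bigD1 r') //= dfwithin [X in _ <= _ * X](bigD1 r') //=.
have A0 : 0 <= A := le_trans ler01 A1.
apply: ler_pM; [exact: norm1_ge0 | by apply: prodr_ge0 => k _; apply: norm1_ge0 |
  exact: y_eta |].
have Q0 : 0 <= \prod_(k < K | k != r') A by apply: prodr_ge0.
apply: le_trans _ (ler_peMl Q0 A1).
apply: ler_prod => k kr; rewrite norm1_ge0 dfwithout 1?eq_sym //= /add_upto.
have := xy_A k; have := norm1_ge0 (y k).
by case: ifP => _ *; [apply: le_trans (norm1D _ _) _ | ]; lra.
Qed.

End Multilinear.

Lemma is_derive_normF_sqr {R : realType} {n} {gamma : R -> 'rV[R]_n} {t : R} {v} :
  is_derive t (1 : R) gamma v ->
  is_derive t (1 : R) (fun s => normF (gamma s) ^+ 2) (2 * dotF (gamma t) v).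
Proof.
move=> [dg Dv].
have coord p : is_derive t (1 : R) (fun s => gamma s ord0 p) (v ord0 p).
  apply: DeriveDef; first by move/derivable_mxP: dg; apply.
  by rewrite -Dv (derive_mx dg) mxE.
have -> : (fun s => normF (gamma s) ^+ 2) =
    \sum_(p < n) ((fun s => gamma s ord0 p) * (fun s => gamma s ord0 p)).
  by apply: funext => s; rewrite normF_sqr dotF_sqr fct_sumE; apply: eq_bigr => p _.
apply: is_derive_eq (is_derive_sum (fun p => is_deriveM (coord p) (coord p))) _.
rewrite /dotF mulr_sumr; apply: eq_bigr => p _ /=; rewrite /GRing.scale /=; ring.
Qed.

Section TensorNorms.
Context {R : realType} {D : nat} {m : 'I_D -> nat}.
Implicit Type X : tens R D m.

Lemma normF_le_normT X l : normF (X l) <= normT X.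
Proof.
apply: ler_sqr_sqrtr; first exact: normF_ge0.
by rewrite (bigD1 l) //= lerDl sumr_ge0 // => l' _; apply: sqr_ge0.
Qed.

Lemma normT_le_sum_norm1 X : normT X <= \sum_l norm1 (X l).
Proof.
have norm1X_ge0 l : 0 <= norm1 (X l) by exact: norm1_ge0.
apply: sqrtr_le_sqr; first exact: sumr_ge0.
apply: le_trans (sum_sqr_le_sqr_sum (fun l => normF_ge0 (X l))) _.
rewrite ler_sqr ?nnegrE ?sumr_ge0 //; last by move=> l _; apply: normF_ge0.
by apply: ler_sum => l _; apply: normF_le_norm1.
Qed.

End TensorNorms.

Section LayerGradients.
Context {R : realType} {D : nat} {K : 'I_D -> nat}
  {n : forall l : 'I_D, 'I_(K l) -> nat} {m : 'I_D -> nat}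
  {Phi : forall l : 'I_D, (forall k : 'I_(K l), 'rV[R]_(n l k)) -> 'rV[R]_(m l)}.
Hypothesis Phi_ml : forall l, multilinear (Phi l).
Context {f : tens R D m -> R} {gf : tens R D m -> tens R D m}.
Hypothesis f_grad : has_gradient f gf.
Implicit Type G : cores R D K n.

Definition layer_dir G l k (v : 'rV[R]_(n l k)) : tens R D m :=
  dfwith (fun l' => 0) l (Phi l (dfwith (G l) k v)).

Lemma layers_line G l k v s :
  layers Phi (Defs.addC R D K n G (scaleC R D K n s (@singleC R D K n l k v))) =
  addT R D m (layers Phi G) (scaleT R D m s (layer_dir G l k v)).
Proof.
apply: functional_extensionality_dep => l'; rewrite /layers /addT /scaleT /Defs.addC /scaleC.
rewrite /singleC /layer_dir; case: (eqVneq l l') => [<-|ne]; last first.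
  rewrite !dfwithout // scaler0 addr0; congr (Phi l' _).
  by apply: functional_extensionality_dep => k'; rewrite scaler0 addr0.
rewrite !dfwithin.
transitivity (Phi l (dfwith (G l) k (s *: v + G l k))).
  congr (Phi l _); apply: functional_extensionality_dep => k'; rewrite /zeroC.
  case: (eqVneq k k') => [<-|ne]; first by rewrite !dfwithin addrC.
  by rewrite !dfwithout // scaler0 addr0.
by rewrite (Phi_ml l) dfwith_id addrC.
Qed.

Lemma dotT_layer_dir G l k v X :
  dotT X (layer_dir G l k v) = dotF (X l) (Phi l (dfwith (G l) k v)).
Proof.
rewrite /dotT (bigD1 l) //= /layer_dir dfwithin big1 ?addr0 // => l' ne.
by rewrite dfwithout 1?eq_sym // /dotF big1 // => p _; rewrite mxE mulr0.
Qed.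

Lemma gradC_chain G l k : gradC Phi f G l k =
  \row_p dotF (gf (layers Phi G) l) (Phi l (dfwith (G l) k (delta_mx 0 p))).
Proof.
apply/rowP => p; rewrite !mxE /lossF.
under eq_fun do rewrite layers_line.
by case: (f_grad (layers Phi G) (layer_dir G l k (delta_mx 0 p))) => _ ->;
  rewrite dotT_layer_dir.
Qed.

(* Euler's identity: the pairing does not depend on k. *)
Lemma dotF_core_gradC G l k :
  dotF (G l k) (gradC Phi f G l k) = dotF (gf (layers Phi G) l) (layers Phi G l).
Proof.
rewrite /layers (multilinear_expand (Phi_ml l) (G l) k) dotF_sumr gradC_chain.
by apply: eq_bigr => p _; rewrite dotFZr mxE.
Qed.

Lemma dotF_core_samGrad G rho l k :
  dotF (G l k) (samGrad Phi f rho G l k) =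
  dotF (gf (layers Phi (perturbed Phi f rho G)) l) (layers Phi (perturbed Phi f rho G) l)
  - rho * uD Phi f G * dotF (gradC Phi f G l k) (samGrad Phi f rho G l k).
Proof.
have -> : G l k = perturbed Phi f rho G l k - (rho * uD Phi f G) *: gradC Phi f G l k.
  by rewrite addrK.
by rewrite dotFBl dotFZl dotF_core_gradC.
Qed.

Lemma sam_norm_gap_derivative {G rho} {gamma : R -> cores R D K n} {t0} l i j :
  gamma t0 = G -> sam_flow_at Phi f rho gamma t0 ->
  is_derive t0 (1 : R) (fun t => normF (gamma t l i) ^+ 2 - normF (gamma t l j) ^+ 2)
    (2 * rho * uD Phi f G * (normF (gradC Phi f G l i) ^+ 2 - normF (gradC Phi f G l j) ^+ 2)
     + 2 * (rho * uD Phi f G)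
       * (dotF (gradC Phi f G l i) (samGrad Phi f rho G l i - gradC Phi f G l i)
          - dotF (gradC Phi f G l j) (samGrad Phi f rho G l j - gradC Phi f G l j))).
Proof.
move=> gamma_t0 flow.
have := is_deriveB (is_derive_normF_sqr (flow l i)) (is_derive_normF_sqr (flow l j)).
rewrite gamma_t0 !dotFNr (dotF_core_samGrad G rho l i) (dotF_core_samGrad G rho l j).
move=> /is_derive_eq; apply.
by rewrite !normF_sqr !dotFBr; ring.
Qed.

End LayerGradients.

Section SamEstimates.
Context {R : realType} {D : nat} {K : 'I_D -> nat}
  {n : forall l : 'I_D, 'I_(K l) -> nat} {m : 'I_D -> nat}
  {Phi : forall l : 'I_D, (forall k : 'I_(K l), 'rV[R]_(n l k)) -> 'rV[R]_(m l)}.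
Hypothesis Phi_ml : forall l, multilinear (Phi l).
Variable M : 'I_D -> R.
Hypothesis M_ge0 : forall l, 0 <= M l.
Hypothesis M_bound :
  forall l w, norm1 (Phi l w) <= M l * \prod_(k < K l) norm1 (w k).

Definition max_dim : nat := (\max_(l < D) \max_(k < K l) n l k)%N.

Lemma dim_le_max_dim l k : (n l k)%:R <= max_dim%:R :> R.
Proof.
rewrite ler_nat; apply: leq_trans (@leq_bigmax _ (fun l => \max_(k < K l) n l k) l).
exact: (@leq_bigmax _ (fun k => n l k)).
Qed.

(* Bounds the l1 norms of the cores of layer l and of their SAM perturbations (for rho <= 1),
   given the Frobenius norms [b l k] of the cores. *)
Definition core_bound (b : forall l, 'I_(K l) -> R) l : R :=
  max_dim%:R * \sum_(k < K l) (b l k + 1) + 1.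

Definition layer_lip b l : R :=
  (K l)%:R * M l * max_dim%:R * core_bound b l ^+ K l.

Definition tens_lip b : R := \sum_l layer_lip b l.

Definition grad_lip (Lhat : R) b (gn : R) l : R :=
  (`|Lhat| * tens_lip b + gn * (K l)%:R * max_dim%:R) * M l * core_bound b l ^+ K l.

Definition sam_const Lhat b gn : R := 4 * max_dim%:R * \sum_l grad_lip Lhat b gn l.

Context {f : tens R D m -> R} {gf : tens R D m -> tens R D m}.
Hypothesis f_grad : has_gradient f gf.
Variables (Lhat : R) (G : cores R D K n) (rho : R).
Hypotheses (gf_lip : lipschitz_grad gf Lhat)
  (gradC_neq0 : exists l k, gradC Phi f G l k != 0)
  (rho_gt0 : 0 < rho) (rho_le1 : rho <= 1).

Let g := gradC Phi f G.
Let u := uD Phi f G.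
Let b l k := normF (G l k).
Let A := core_bound b.
Let step l k := (rho * u) *: g l k.
Let Gt := perturbed Phi f rho G.
Let T := layers Phi G.
Let Tt := layers Phi Gt.
Let gn := normT (gf T).

Lemma uD_gt0 : 0 < u.
Proof.
have [l [k gk]] := gradC_neq0.
rewrite invr_gt0 sqrtr_gt0 (bigD1 l) //= (bigD1 k) //= -addrA ltr_pwDl //.
  by rewrite normF_sqr dotF_gt0.
by rewrite addr_ge0 ?sumr_ge0 // => *; rewrite ?sumr_ge0 // => *; apply: sqr_ge0.
Qed.

Lemma uD_normF_gradC_le1 l k : u * normF (g l k) <= 1.
Proof.
have u0 := uD_gt0; rewrite mulrC -ler_pdivlMr // div1r invrK.
apply: ler_sqr_sqrtr; first exact: normF_ge0.
rewrite (bigD1 l) //= (bigD1 k) //= -addrA lerDl.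
by rewrite addr_ge0 ?sumr_ge0 // => *; rewrite ?sumr_ge0 // => *; apply: sqr_ge0.
Qed.

Lemma rho_uD_normF_gradC_le l k : rho * u * normF (g l k) <= rho.
Proof. by rewrite -mulrA ler_piMr ?uD_normF_gradC_le1 // ltW. Qed.

Lemma norm1_sam_step l k : norm1 (step l k) <= max_dim%:R * rho.
Proof.
have ru0 : 0 <= rho * u by rewrite mulr_ge0 // ltW // uD_gt0.
rewrite norm1Z ger0_norm //.
apply: le_trans (ler_wpM2l ru0 (norm1_le_normF _)) _.
rewrite mulrCA; apply: ler_pM; rewrite ?ler0n ?dim_le_max_dim //.
  by rewrite mulr_ge0 ?normF_ge0.
exact: rho_uD_normF_gradC_le.
Qed.

Lemma core_bound_ge1 l : 1 <= A l.
Proof.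
rewrite lerDr mulr_ge0 ?ler0n ?sumr_ge0 // => k _.
by rewrite addr_ge0 ?normF_ge0.
Qed.

Lemma norm1_core_step_le l k : norm1 (G l k) + norm1 (step l k) <= A l.
Proof.
have normG : norm1 (G l k) <= max_dim%:R * b l k.
  by apply: le_trans (norm1_le_normF _) _; rewrite ler_wpM2r ?normF_ge0 ?dim_le_max_dim.
have NrhoN : max_dim%:R * rho <= max_dim%:R :> R by rewrite ler_piMr ?ler0n.
have bk : b l k + 1 <= \sum_(k' < K l) (b l k' + 1).
  by rewrite (bigD1 k) //= lerDl sumr_ge0 // => k' _; rewrite addr_ge0 ?normF_ge0.
have := norm1_sam_step l k; have := ler_wpM2l (ler0n _ max_dim) bk.
rewrite /A /core_bound; lra.
Qed.

Lemma norm1_layers_perturbed l : norm1 (Tt l - T l) <= rho * layer_lip b l.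
Proof.
have -> : rho * layer_lip b l = (K l)%:R * M l * (max_dim%:R * rho) * A l ^+ K l.
  by rewrite /layer_lip; ring.
exact: (multilinear_lipschitz (Phi_ml l) (M_ge0 l) (M_bound l) (core_bound_ge1 l)
  (norm1_sam_step l) (norm1_core_step_le l)).
Qed.

Lemma normT_layers_perturbed : normT (addT R D m Tt (oppT R D m T)) <= rho * tens_lip b.
Proof.
apply: le_trans (normT_le_sum_norm1 _) _; rewrite /tens_lip mulr_sumr.
by apply: ler_sum => l _; apply: norm1_layers_perturbed.
Qed.

Lemma normF_gf_perturbed l : normF (gf Tt l - gf T l) <= `|Lhat| * (rho * tens_lip b).
Proof.
apply: le_trans (normF_le_normT (addT R D m (gf Tt) (oppT R D m (gf T))) l) _.
apply: le_trans (gf_lip _ _) (le_trans (ler_wpM2r (sqrtr_ge0 _) (ler_norm Lhat)) _).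
by rewrite ler_wpM2l ?normT_layers_perturbed.
Qed.

Lemma norm1_Phi_delta_perturbed l k p :
  norm1 (Phi l (dfwith (Gt l) k (delta_mx 0 p))) <= M l * A l ^+ K l.
Proof.
apply: le_trans (M_bound _ _) _; rewrite ler_wpM2l // -[in X in _ <= X](card_ord (K l)).
rewrite -prodr_const; apply: ler_prod => k' _; rewrite norm1_ge0 /=.
have := core_bound_ge1 l; case: (eqVneq k k') => [<-|ne].
  by rewrite dfwithin norm1_delta.
rewrite dfwithout // => _; exact: le_trans (norm1D _ _) (norm1_core_step_le l k').
Qed.

Lemma norm1_Phi_delta_diff l k p :
  norm1 (Phi l (dfwith (Gt l) k (delta_mx 0 p)) - Phi l (dfwith (G l) k (delta_mx 0 p)))
  <= rho * layer_lip b l.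
Proof.
pose x := dfwith (G l) k (delta_mx 0 p : 'rV[R]_(n l k)).
pose y := dfwith (step l) k (0 : 'rV[R]_(n l k)).
have -> : dfwith (Gt l) k (delta_mx 0 p) = fun k' => x k' + y k'.
  apply: functional_extensionality_dep => k'; rewrite /x /y.
  by case: (eqVneq k k') => [<-|ne]; rewrite ?dfwithin ?addr0 // !dfwithout.
have y_step k' : norm1 (y k') <= max_dim%:R * rho.
  rewrite /y; case: (eqVneq k k') => [<-|ne]; last by rewrite dfwithout ?norm1_sam_step.
  by rewrite dfwithin norm1_0 mulr_ge0 ?ler0n ?ltW.
have xy_A k' : norm1 (x k') + norm1 (y k') <= A l.
  rewrite /x /y; case: (eqVneq k k') => [<-|ne]; last first.
    by rewrite !dfwithout ?norm1_core_step_le.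
  by rewrite !dfwithin norm1_delta norm1_0 addr0 core_bound_ge1.
have -> : rho * layer_lip b l = (K l)%:R * M l * (max_dim%:R * rho) * A l ^+ K l.
  by rewrite /layer_lip; ring.
exact: (multilinear_lipschitz (Phi_ml l) (M_ge0 l) (M_bound l) (core_bound_ge1 l) y_step xy_A).
Qed.

Lemma grad_lip_ge0 l : 0 <= grad_lip Lhat b gn l.
Proof.
have A0 l' : 0 <= A l' := le_trans ler01 (core_bound_ge1 l').
have lip0 : 0 <= tens_lip b.
  by apply: sumr_ge0 => l' _; rewrite !mulr_ge0 ?ler0n ?exprn_ge0.
apply: mulr_ge0; last exact: exprn_ge0.
apply: mulr_ge0 => //; apply: addr_ge0; first exact: mulr_ge0.
by rewrite !mulr_ge0 ?ler0n ?sqrtr_ge0.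
Qed.

Lemma norm1_samGrad_diff l k :
  norm1 (samGrad Phi f rho G l k - g l k) <= max_dim%:R * (rho * grad_lip Lhat b gn l).
Proof.
apply: le_trans (_ : \sum_(p < n l k) rho * grad_lip Lhat b gn l <= _); last first.
  rewrite sumr_const card_ord -[X in X <= _]mulr_natl ler_wpM2r ?dim_le_max_dim //.
  by rewrite mulr_ge0 ?grad_lip_ge0 // ltW.
apply: ler_sum => p _; rewrite mxE /samGrad /g !(gradC_chain Phi_ml f_grad) !mxE.
set U := Phi l (dfwith (Gt l) k _); set V := Phi l (dfwith (G l) k _).
have -> : dotF (gf Tt l) U - dotF (gf T l) V
    = dotF (gf Tt l - gf T l) U + dotF (gf T l) (U - V).
  by rewrite dotFBl dotFBr addrA subrK.
have e1 : `|dotF (gf Tt l - gf T l) U| <= `|Lhat| * (rho * tens_lip b) * (M l * A l ^+ K l).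
  exact: le_trans (ler_dotF _ _) (ler_pM (normF_ge0 _) (norm1_ge0 _)
    (normF_gf_perturbed l) (norm1_Phi_delta_perturbed l k p)).
have e2 : `|dotF (gf T l) (U - V)| <= gn * (rho * layer_lip b l).
  exact: le_trans (ler_dotF _ _) (ler_pM (normF_ge0 _) (norm1_ge0 _)
    (normF_le_normT _ l) (norm1_Phi_delta_diff l k p)).
apply: le_trans (ler_normD _ _) (le_trans (lerD e1 e2) _).
by rewrite le_eqVlt; apply/orP; left; apply/eqP; rewrite /grad_lip /layer_lip; ring.
Qed.

Lemma sam_remainder_bound l i j :
  `|2 * (rho * u) * (dotF (g l i) (samGrad Phi f rho G l i - g l i)
                   - dotF (g l j) (samGrad Phi f rho G l j - g l j))|
  <= sam_const Lhat b gn * rho ^+ 2.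
Proof.
have ru0 : 0 <= rho * u by rewrite mulr_ge0 // ltW // uD_gt0.
pose gl := grad_lip Lhat b gn l.
have term_le k : rho * u * `|dotF (g l k) (samGrad Phi f rho G l k - g l k)|
    <= rho ^+ 2 * (max_dim%:R * gl).
  apply: le_trans (ler_wpM2l ru0 (ler_dotF _ _)) _; rewrite [X in X <= _]mulrA.
  apply: le_trans (ler_pM _ (norm1_ge0 _) (rho_uD_normF_gradC_le l k)
    (norm1_samGrad_diff l k)) _; first by rewrite mulr_ge0 ?normF_ge0.
  by rewrite le_eqVlt; apply/orP; left; apply/eqP; rewrite /gl; ring.
have gl_le : rho ^+ 2 * (max_dim%:R * gl)
    <= rho ^+ 2 * (max_dim%:R * \sum_l' grad_lip Lhat b gn l').
  rewrite ler_wpM2l ?sqr_ge0 // ler_wpM2l ?ler0n // (bigD1 l) //= lerDl.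
  by rewrite sumr_ge0 // => l' _; apply: grad_lip_ge0.
have two_ru0 : 0 <= 2 * (rho * u) by rewrite mulr_ge0.
rewrite normrM ger0_norm //; apply: le_trans (ler_wpM2l two_ru0 (ler_normB _ _)) _.
have -> : sam_const Lhat b gn * rho ^+ 2
    = 4 * (rho ^+ 2 * (max_dim%:R * \sum_l' grad_lip Lhat b gn l')).
  by rewrite /sam_const; ring.
rewrite -[X in X <= _]mulrA mulrDr.
have := term_le i; have := term_le j; move: gl_le.
set P := rho ^+ 2 * (max_dim%:R * gl); set Q := rho ^+ 2 * _.
set ti := rho * u * _; set tj := rho * u * _; lra.
Qed.

End SamEstimates.

Theorem theorem4 (R : realType) (D : nat) (K : 'I_D -> nat)
  (n : forall l : 'I_D, 'I_(K l) -> nat) (m : 'I_D -> nat)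
  (Phi : forall l : 'I_D, (forall k : 'I_(K l), 'rV[R]_(n l k)) -> 'rV[R]_(m l)) :
  (forall l : 'I_D, (2 <= K l)%N) ->
  (forall l : 'I_D, multilinear (Phi l)) ->
  exists C : R -> (forall l : 'I_D, 'I_(K l) -> R) -> R -> R,
  forall (Lhat : R) (f : tens R D m -> R) (gf : tens R D m -> tens R D m),
    has_gradient f gf ->
    lipschitz_grad gf Lhat ->
  forall G : cores R D K n,
    (exists (l : 'I_D) (k : 'I_(K l)), gradC Phi f G l k != 0) ->
  forall (l : 'I_D) (i j : 'I_(K l)), i != j ->
  forall rho : R, 0 < rho -> rho <= 1 ->
  forall (gamma : R -> cores R D K n) (t0 : R),
    gamma t0 = G ->
    sam_flow_at Phi f rho gamma t0 ->
    exists Rij : R,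
      is_derive t0 (1 : R)
        (fun t => normF (gamma t l i) ^+ 2 - normF (gamma t l j) ^+ 2)
        (2 * rho * uD Phi f G
           * (normF (gradC Phi f G l i) ^+ 2 - normF (gradC Phi f G l j) ^+ 2)
         + Rij)
      /\ `|Rij| <= C Lhat (fun l k => normF (G l k)) (normT (gf (layers Phi G)))
                   * rho ^+ 2.
Proof.
move=> _ Phi_ml.
have /choice [M M_spec] := fun l => multilinear_bound (Phi_ml l).
exists (@sam_const R D K n M).
move=> Lhat f gf f_grad gf_lip G gradC_neq0 l i j _ rho rho_gt0 rho_le1 gamma t0 gamma_t0 flow.
have M_ge0 l := (M_spec l).1; have M_bound l := (M_spec l).2.
eexists; split; first exact: (sam_norm_gap_derivative Phi_ml f_grad l i j gamma_t0 flow).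
exact: (sam_remainder_bound Phi_ml M M_ge0 M_bound f_grad Lhat G rho gf_lip gradC_neq0
  rho_gt0 rho_le1 l i j).
Qed.
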